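(* Let $A\in\mathbb{C}^{n\times n}$ be written in the core-EP decomposition $A=U\begin{bmatrix}T&S\\0&N\end{bmatrix}U^*$ (as described in the context) and let $m\in\mathbb{N}=\{1,2,\dots\}$. Then $$A^{\#_m}=U\begin{bmatrix}T^{-1}&T^{-(m+1)}\tilde{T}_mP_{N^m}\\0&0\end{bmatrix}U^*,\qquad \tilde{T}_m=\sum_{i=0}^{m-1}T^iSN^{m-1-i}.$$
   Context: Core-EP decomposition: every $A\in\mathbb{C}^{n\times n}$ of index $k$ can be written as $A=U\begin{bmatrix}T&S\\0&N\end{bmatrix}U^*$ with $U$ unitary, $T\in\mathbb{C}^{t\times t}$ nonsingular, $t=\mathrm{rk}(A^k)$, and $N\in\mathbb{C}^{(n-t)\times(n-t)}$ nilpotent of index $k$ (blocks of size zero allowed). Here the index $\mathrm{Ind}(A)$ is the smallest nonnegative integer $k$ with $\mathcal{R}(A^k)=\mathcal{R}(A^{k+1})$, $A^0=I$. For a matrix $B$, $B^\dagger$ is its Moore–Penrose inverse and $P_B=BB^\dagger$. The core-EP inverse $A^{\mathrm{cEP}}$ is the unique $X$ with $XAX=X$ and $\mathcal{R}(X)=\mathcal{R}(X^* )=\mathcal{R}(A^k)$. For $m\in\mathbb{N}$, the $m$-weak group inverse is $A^{\mathrm{WG}_m}:=(A^{\mathrm{cEP}})^{m+1}A^m$ and the $m$-weak core inverse is $A^{\#_m}:=A^{\mathrm{WG}_m}P_{A^m}$. *)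

(* Complex matrices over an arbitrary numClosedFieldType C
   (e.g. the complex numbers), with conjugation Num.conj. *)
From HB Require Import structures.
From mathcomp Require Import all_boot all_order all_algebra.
From Stdlib Require Import ClassicalEpsilon.
Set Implicit Arguments. Unset Strict Implicit. Unset Printing Implicit Defensive.
Import Order.TTheory GRing.Theory Num.Theory.
Local Open Scope ring_scope.

Section Defs.
Variable C : numClosedFieldType.

Definition ctr p q (B : 'M[C]_(p, q)) : 'M[C]_(q, p) := (map_mx Num.conj B)^T.

(* column space (range) equality R(X) = R(Y): row spaces of the transposes *)
Definition range_eq p q r (X : 'M[C]_(p, q)) (Y : 'M[C]_(p, r)) : bool :=
  (X^T == Y^T)%MS.

Definition is_index n (A : 'M[C]_n) (k : nat) : Prop :=
  range_eq (A ^+ k) (A ^+ k.+1) /\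
  forall j, (j < k)%N -> ~~ range_eq (A ^+ j) (A ^+ j.+1).

Definition nilpotent_index n (N : 'M[C]_n) (k : nat) : Prop :=
  N ^+ k = 0 /\ forall j, (j < k)%N -> N ^+ j != 0.

Definition is_MP p q (B : 'M[C]_(p, q)) (X : 'M[C]_(q, p)) : Prop :=
  [/\ B *m X *m B = B, X *m B *m X = X,
      ctr (B *m X) = B *m X & ctr (X *m B) = X *m B].

Definition MP p q (B : 'M[C]_(p, q)) : 'M[C]_(q, p) :=
  epsilon (inhabits 0) (is_MP B).

Definition Pmx p q (B : 'M[C]_(p, q)) : 'M[C]_p := B *m MP B.

Definition is_coreEP n (A : 'M[C]_n) (X : 'M[C]_n) : Prop :=
  exists k, [/\ is_index A k, X *m A *m X = X,
                range_eq X (A ^+ k) & range_eq (ctr X) (A ^+ k)].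

Definition coreEP n (A : 'M[C]_n) : 'M[C]_n :=
  epsilon (inhabits 0) (is_coreEP A).

(* m-weak group inverse and m-weak core inverse *)
Definition WGm n (A : 'M[C]_n) (m : nat) : 'M[C]_n :=
  coreEP A ^+ m.+1 *m A ^+ m.

Definition wcorem n (A : 'M[C]_n) (m : nat) : 'M[C]_n :=
  WGm A m *m Pmx (A ^+ m).

End Defs.

From HB Require Import structures.
From mathcomp Require Import all_boot all_order all_algebra.
From Stdlib Require Import ClassicalEpsilon.
From mathcomp Require Import zify.
Set Implicit Arguments. Unset Strict Implicit. Unset Printing Implicit Defensive.
Import Order.TTheory GRing.Theory Num.Theory.
Local Open Scope ring_scope.

(* In core-EP coordinates the core-EP inverse is U diag(T^-1, 0) U^*, and
   since A^m = U [T^m, T~_m; 0, N^m] U^* has the invertible corner T^m, the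
   projector onto its range is P_{A^m} = U diag(1, P_{N^m}) U^*.  Multiplying
   (A^cEP)^(m+1) A^m P_{A^m} blockwise gives the formula.  Both
   identifications are uniqueness arguments: for the core-EP inverse, and for
   the orthogonal projector onto a given range, P_B = B B^dagger, where the
   Moore-Penrose inverse exists by a full-rank factorization. *)

Section ConjugateTranspose.
Variable C : numClosedFieldType.

Lemma ctr_mul p q r (A : 'M[C]_(p, q)) (B : 'M[C]_(q, r)) :
  ctr (A *m B) = ctr B *m ctr A.
Proof. by rewrite /ctr map_mxM trmx_mul. Qed.

Lemma ctrK p q (A : 'M[C]_(p, q)) : ctr (ctr A) = A.
Proof. by apply/matrixP => i j; rewrite !mxE conjCK. Qed.

Lemma ctr1 p : ctr (1%:M : 'M[C]_p) = 1%:M.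
Proof. by rewrite /ctr map_mx1 trmx1. Qed.

Lemma ctr0 p q : ctr (0 : 'M[C]_(p, q)) = 0.
Proof. by apply/matrixP => i j; rewrite !mxE rmorph0. Qed.

Lemma ctrB p q (A B : 'M[C]_(p, q)) : ctr (A - B) = ctr A - ctr B.
Proof. by apply/matrixP => i j; rewrite !mxE rmorphB. Qed.

Lemma ctr_block p1 p2 q1 q2 (a : 'M[C]_(p1, q1)) (b : 'M[C]_(p1, q2))
  (c : 'M[C]_(p2, q1)) (d : 'M[C]_(p2, q2)) :
  ctr (block_mx a b c d) = block_mx (ctr a) (ctr c) (ctr b) (ctr d).
Proof. by rewrite /ctr map_block_mx tr_block_mx. Qed.

Lemma ctr_invmx p (M : 'M[C]_p) : ctr (invmx M) = invmx (ctr M).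
Proof. by rewrite /ctr map_invmx trmx_inv. Qed.

Lemma unitmx_ctr p (M : 'M[C]_p) : (ctr M \in unitmx) = (M \in unitmx).
Proof. by rewrite /ctr unitmx_tr map_unitmx. Qed.

Lemma mulmx_ctr_eq0 p q (D : 'M[C]_(p, q)) : D *m ctr D = 0 -> D = 0.
Proof.
move=> DD0; apply/matrixP => i j; rewrite mxE.
have /eqP := congr1 (fun M : 'M[C]_p => M i i) DD0; rewrite !mxE.
rewrite psumr_eq0 => [/allP/(_ j (mem_index_enum _))|k _]; rewrite !mxE.
  by rewrite mul_conjC_eq0 => /eqP.
exact: mul_conjC_ge0.
Qed.

Lemma unitmx_ctr_mulmx p r (F : 'M[C]_(p, r)) (L : 'M[C]_(r, p)) :
  L *m F = 1%:M -> ctr F *m F \in unitmx.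
Proof.
move=> LF; rewrite -row_free_unit; apply: inj_row_free => v vFF0.
have vF0 : v *m ctr F = 0.
  by apply: mulmx_ctr_eq0; rewrite ctr_mul ctrK mulmxA -(mulmxA v) vFF0 mul0mx.
have Fv0 : F *m ctr v = 0 by rewrite -[F]ctrK -ctr_mul vF0 ctr0.
have v0 : ctr v = 0 by rewrite -[ctr v]mul1mx -LF -mulmxA Fv0 mulmx0.
by rewrite -[v]ctrK v0 ctr0.
Qed.

End ConjugateTranspose.

Section MoorePenrose.
Variable C : numClosedFieldType.

Lemma is_MP_factor p q r (F : 'M[C]_(p, r)) (G : 'M[C]_(r, q)) F' G' :
  F' *m F = 1%:M -> G *m G' = 1%:M ->
  ctr (F *m F') = F *m F' -> ctr (G' *m G) = G' *m G ->
  is_MP (F *m G) (G' *m F').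
Proof.
move=> FF' GG' FFh GGh.
have BX : F *m G *m (G' *m F') = F *m F'.
  by rewrite mulmxA -(mulmxA F G) GG' mulmx1.
have XB : G' *m F' *m (F *m G) = G' *m G.
  by rewrite mulmxA -(mulmxA G' F') FF' mulmx1.
split; rewrite ?BX ?XB //.
- by rewrite -mulmxA (mulmxA F') FF' mul1mx.
- by rewrite mulmxA -(mulmxA G') GG' mulmx1.
Qed.

Lemma MP_full_rank_exists p q r (F : 'M[C]_(p, r)) (G : 'M[C]_(r, q)) L R :
  L *m F = 1%:M -> G *m R = 1%:M -> exists X, is_MP (F *m G) X.
Proof.
move=> /unitmx_ctr_mulmx FFu GR.
have GGu : G *m ctr G \in unitmx.
  rewrite -[G in G *m _]ctrK; apply: (@unitmx_ctr_mulmx _ _ _ _ (ctr R)).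
  by rewrite -ctr_mul GR ctr1.
eexists; apply: (is_MP_factor (F' := invmx (ctr F *m F) *m ctr F)
                              (G' := ctr G *m invmx (G *m ctr G))).
- by rewrite -mulmxA mulVmx.
- by rewrite mulmxA mulmxV.
- by rewrite !ctr_mul ctrK ctr_invmx ctr_mul ctrK mulmxA.
- by rewrite !ctr_mul ctrK ctr_invmx ctr_mul ctrK mulmxA.
Qed.

Lemma MP_spec p q (B : 'M[C]_(p, q)) : is_MP B (MP B).
Proof.
apply: epsilon_spec; rewrite -[B in is_MP B](mulmx_base B).
have [L LF] := row_fullP (col_base_full B).
have [R GR] := row_freeP (row_base_free B).
exact: MP_full_rank_exists LF GR.
Qed.

Lemma Pmx_eq_proj p q (B : 'M[C]_(p, q)) (Q : 'M[C]_p) Y :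
  ctr Q = Q -> Q *m B = B -> Q = B *m Y -> Pmx B = Q.
Proof.
move=> Qh QB QBY; have [BXB _ BXh _] := MP_spec B.
have PQ : Pmx B *m Q = Q by rewrite QBY /Pmx mulmxA BXB.
by rewrite -PQ -[RHS]ctrK ctr_mul Qh /Pmx BXh mulmxA QB BXh.
Qed.

Lemma Pmx_conj p q (U : 'M[C]_p) (V : 'M[C]_q) (B : 'M[C]_(p, q)) :
  U *m ctr U = 1%:M -> V \in unitmx ->
  Pmx (U *m B *m V) = U *m Pmx B *m ctr U.
Proof.
move=> UU Vu; have UU' := mulmx1C UU.
have [PB _ Ph _] : is_MP B (MP B) := MP_spec B; rewrite -/(Pmx B) in PB Ph.
apply: (Pmx_eq_proj (Y := invmx V *m MP B *m ctr U)).
- by rewrite ctr_mul ctr_mul ctrK Ph mulmxA.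
- have -> : U *m Pmx B *m ctr U *m (U *m B *m V)
            = U *m (Pmx B *m (ctr U *m U) *m B) *m V by rewrite !mulmxA.
  by rewrite UU' mulmx1 PB.
- by rewrite !mulmxA -(mulmxA _ V) mulmxV // mulmx1 -(mulmxA U B).
Qed.

Lemma Pmx_block_upper t s r (P : 'M[C]_t) (Q : 'M[C]_(t, r)) (R : 'M[C]_(s, r)) :
  P \in unitmx -> Pmx (block_mx P Q 0 R) = block_mx 1%:M 0 0 (Pmx R).
Proof.
move=> Pu; have [RXR _ RXh _] := MP_spec R.
apply: (Pmx_eq_proj (Y := block_mx (invmx P) (- (invmx P *m Q *m MP R)) 0 (MP R))).
- by rewrite ctr_block !ctr0 ctr1 RXh.
- by rewrite mulmx_block !mulmx0 !mul0mx !mul1mx !addr0 !add0r RXR.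
- rewrite mulmx_block !mulmx0 !mul0mx !addr0 add0r mulmxV // mulmxN !mulmxA.
  by rewrite mulmxV // mul1mx addNr.
Qed.

End MoorePenrose.

Section Ranges.
Variable C : numClosedFieldType.

Lemma range_eqP p q r (X : 'M[C]_(p, q)) (Y : 'M[C]_(p, r)) :
  range_eq X Y <-> (exists Z, X = Y *m Z) /\ (exists W, Y = X *m W).
Proof.
rewrite /range_eq; split.
- case/andP => /submxP [D XD] /submxP [E YE]; split.
  + by exists D^T; rewrite -[X]trmxK XD trmx_mul trmxK.
  + by exists E^T; rewrite -[Y]trmxK YE trmx_mul trmxK.
- case=> [[Z XYZ] [W YXW]]; apply/andP; split; apply/submxP.
  + by exists Z^T; rewrite XYZ trmx_mul.
  + by exists W^T; rewrite YXW trmx_mul.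
Qed.

Lemma range_eq_mul p q r (U : 'M[C]_(r, p)) (V : 'M[C]_q) (X Y : 'M[C]_(p, q)) :
  V \in unitmx -> range_eq X Y -> range_eq (U *m X *m V) (U *m Y *m V).
Proof.
move=> Vu /range_eqP [[Z XYZ] [W YXW]]; apply/range_eqP; split.
- by exists (invmx V *m Z *m V); rewrite XYZ !mulmxA mulmxK.
- by exists (invmx V *m W *m V); rewrite YXW !mulmxA mulmxK.
Qed.

Lemma range_eq_block_upper t s r (P P' : 'M[C]_t) (Q Q' : 'M[C]_(t, r)) :
  P \in unitmx -> P' \in unitmx ->
  range_eq (block_mx P Q (0 : 'M_(s, t)) 0) (block_mx P' Q' 0 0).
Proof.
have factor (P1 P2 : 'M[C]_t) (Q1 Q2 : 'M[C]_(t, r)) : P2 \in unitmx ->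
    block_mx P1 Q1 (0 : 'M_(s, t)) 0
    = block_mx P2 Q2 0 0 *m block_mx (invmx P2 *m P1) (invmx P2 *m Q1) 0 0.
  move=> P2u; rewrite mulmx_block !mulmx0 !mul0mx !addr0.
  by rewrite !mulmxA mulmxV // !mul1mx.
by move=> Pu P'u; apply/range_eqP; split; eexists; apply: factor.
Qed.

End Ranges.

Section CoreEPUniqueness.
Variable C : numClosedFieldType.

Lemma is_index_uniq n (A : 'M[C]_n) k1 k2 :
  is_index A k1 -> is_index A k2 -> k1 = k2.
Proof.
move=> [eq1 min1] [eq2 min2].
by case: (ltngtP k1 k2) => // [/min2|/min1]; rewrite ?eq1 ?eq2.
Qed.

Lemma coreEP_uniq n (A X Y : 'M[C]_n) : is_coreEP A X -> is_coreEP A Y -> X = Y.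
Proof.
move=> [k [ik XAX /range_eqP [_ [W AkX]] /range_eqP [[Z Xh] _]]].
move=> [k' [/(is_index_uniq ik) <- YAY /range_eqP [_ [W' AkY]]
           /range_eqP [[Z' Yh] _]]].
have [[V AkV] _] := (range_eqP _ _).1 ik.1.
have inv_on_range (X' : 'M[C]_n) W1 : X' *m A *m X' = X' -> A ^+ k = X' *m W1 ->
    X' *m A ^+ k.+1 = A ^+ k.
  by move=> XAX' AkX'; rewrite exprS -mulmxE mulmxA AkX' mulmxA XAX' -AkX'.
(* X - Y annihilates R(A^k), while R((X - Y)^* ) lies in R(A^k). *)
have XYAk : (X - Y) *m A ^+ k = 0.
  rewrite AkV mulmxA mulmxBl (inv_on_range X W) ?(inv_on_range Y W') //.
  by rewrite subrr mul0mx.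
have XYh : ctr (X - Y) = A ^+ k *m (Z - Z').
  by rewrite mulmxBr -Xh -Yh ctrB.
apply/eqP; rewrite -subr_eq0; apply/eqP/mulmx_ctr_eq0.
by rewrite XYh mulmxA XYAk mul0mx.
Qed.

Lemma coreEP_eq n (A X : 'M[C]_n) : is_coreEP A X -> coreEP A = X.
Proof. by move=> AX; apply: (coreEP_uniq _ AX); apply: epsilon_spec; exists X. Qed.

End CoreEPUniqueness.

Section Powers.
Variable C : numClosedFieldType.

Lemma mulVmx_expr t (T : 'M[C]_t) j :
  T \in unitmx -> invmx T ^+ j *m T ^+ j = 1%:M.
Proof.
move=> Tu; elim: j => [|j IHj]; first by rewrite !expr0 -idmxE mulmx1.
by rewrite exprSr exprS -!mulmxE mulmxA -(mulmxA _ (invmx T)) mulVmx // mulmx1.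
Qed.

Lemma unitmx_expr t (T : 'M[C]_t) j : T \in unitmx -> T ^+ j \in unitmx.
Proof. by move=> /(mulVmx_expr j) /mulmx1_unit []. Qed.

Lemma expmx_block_upper t s (T : 'M[C]_t) (S : 'M[C]_(t, s)) (N : 'M[C]_s) j :
  block_mx T S 0 N ^+ j =
  block_mx (T ^+ j) (\sum_(i < j) T ^+ i *m S *m N ^+ (j - 1 - i)) 0 (N ^+ j).
Proof.
elim: j => [|j IHj]; first by rewrite !expr0 big_ord0 -!idmxE -scalar_mx_block.
rewrite exprSr -mulmxE IHj mulmx_block !mulmx0 !mul0mx !addr0 add0r.
rewrite !mulmxE -!exprSr big_ord_recr /= subSS subn0 subnn expr0 mulmx1 addrC.
congr (block_mx _ (_ + _) _ _); rewrite mulmx_suml; apply: eq_bigr => i _.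
by rewrite -mulmxA mulmxE -exprSr; congr (_ *m N ^+ _); have := ltn_ord i; lia.
Qed.

End Powers.

Section UnitaryConjugation.
Variables (C : numClosedFieldType) (n : nat) (U : 'M[C]_n).
Hypothesis unitaryU : U *m ctr U = 1%:M.

Lemma unitary_conjM (M1 M2 : 'M[C]_n) :
  U *m M1 *m ctr U *m (U *m M2 *m ctr U) = U *m (M1 *m M2) *m ctr U.
Proof.
by rewrite !mulmxA -(mulmxA _ (ctr U) U) (mulmx1C unitaryU) mulmx1 -(mulmxA U).
Qed.

Lemma unitary_conjX (M : 'M[C]_n) j : (U *m M *m ctr U) ^+ j = U *m M ^+ j *m ctr U.
Proof.
elim: j => [|j IHj]; first by rewrite !expr0 -idmxE mulmx1.
by rewrite !exprS -!mulmxE IHj unitary_conjM.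
Qed.

End UnitaryConjugation.

Lemma coreEP_core_nilpotent (C : numClosedFieldType) t s k (U : 'M[C]_(t + s))
    (T : 'M[C]_t) (S : 'M[C]_(t, s)) (N : 'M[C]_s) :
  U *m ctr U = 1%:M -> T \in unitmx -> N ^+ k = 0 ->
  is_index (U *m block_mx T S 0 N *m ctr U) k ->
  coreEP (U *m block_mx T S 0 N *m ctr U) = U *m block_mx (invmx T) 0 0 0 *m ctr U.
Proof.
move=> UU Tu Nk ik; have [_ cUu] := mulmx1_unit UU.
apply: coreEP_eq; exists k; split => //.
- rewrite !unitary_conjM // !mulmx_block !mulmx0 !mul0mx !addr0.
  by rewrite mulVmx // mul1mx mul0mx.
- rewrite unitary_conjX // expmx_block_upper Nk.
  by apply/range_eq_mul/range_eq_block_upper; rewrite ?unitmx_inv ?unitmx_expr.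
- rewrite unitary_conjX // expmx_block_upper Nk !ctr_mul ctrK ctr_block !ctr0 mulmxA.
  apply/range_eq_mul/range_eq_block_upper => //.
  + by rewrite ctr_invmx unitmx_inv unitmx_ctr.
  + exact: unitmx_expr.
Qed.

Theorem theorem4p6 (C : numClosedFieldType) (t s k m : nat)
  (A U : 'M[C]_(t + s)) (T : 'M[C]_t) (S : 'M[C]_(t, s)) (N : 'M[C]_s) :
  U *m ctr U = 1%:M ->
  is_index A k ->
  \rank (A ^+ k) = t ->
  T \in unitmx ->
  nilpotent_index N k ->
  A = U *m block_mx T S 0 N *m ctr U ->
  (0 < m)%N ->
  wcorem A m =
  U *m block_mx (invmx T)
                (invmx T ^+ m.+1 *m
                   (\sum_(i < m) T ^+ i *m S *m N ^+ (m - 1 - i)) *m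
                   Pmx (N ^+ m))
                0 0 *m ctr U.
Proof.
move=> UU ik _ Tu [Nk _] defA _; have [_ cUu] := mulmx1_unit UU.
have AcEP := coreEP_core_nilpotent (S := S) UU Tu Nk.
have Am := unitary_conjX UU (block_mx T S 0 N) m.
rewrite expmx_block_upper -defA in Am AcEP.
rewrite /wcorem /WGm (AcEP ik).
rewrite Am Pmx_conj // Pmx_block_upper ?unitmx_expr // unitary_conjX //.
rewrite expmx_block_upper expr0n big1 => [|i _]; last by rewrite mulmx0 mul0mx.
have iTmTm : invmx T ^+ m.+1 *m T ^+ m = invmx T.
  by rewrite exprS -mulmxE -mulmxA mulVmx_expr // mulmx1.
rewrite !unitary_conjM // !mulmx_block !mulmx0 !mul0mx !addr0 !add0r mulmx1.
by rewrite iTmTm mulmxA !mul0mx.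
Qed.
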